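(* Let $\mathcal{D}[t]\subset\mathcal{H}\subset\mathcal{D}^\times[t^\times]$ be a rigged Hilbert space with $\mathcal{D}[t]$ complete and reflexive. A sequence $\{\xi_n\}\subset\mathcal{D}$ is Riesz-Fischer-like if and only if there exists a Bessel-like sequence $\{\zeta_n\}$ in $\mathcal{D}^\times$ such that $\{\xi_n\}$ and $\{\zeta_n\}$ are biorthogonal, i.e. $\langle\zeta_n,\xi_k\rangle=\delta_{n,k}$ for all $n,k\in\mathbb{N}$.
   Context: A rigged Hilbert space $\mathcal{D}[t]\subset\mathcal{H}\subset\mathcal{D}^\times[t^\times]$: $\mathcal{D}$ is a dense subspace of the Hilbert space $\mathcal{H}$ with a locally convex topology $t$ finer than the norm topology, $\mathcal{D}^\times$ is the space of continuous conjugate-linear functionals on $\mathcal{D}[t]$ with the strong dual topology $t^\times=\beta(\mathcal{D}^\times,\mathcal{D})$, $\mathcal{H}\subset\mathcal{D}^\times$, and the duality form $\langle\Phi,\eta\rangle$ (value of $\Phi\in\mathcal{D}^\times$ at $\eta\in\mathcal{D}$) extends the inner product. $\mathcal{L}(\mathcal{D},\mathcal{D}^\times)$ denotes the continuous linear maps $\mathcal{D}[t]\to\mathcal{D}^\times[t^\times]$. $\mathcal{C}(\mathcal{D},\mathcal{H})$ is the set of $X\in\mathcal{L}(\mathcal{D},\mathcal{D}^\times)$ mapping $\mathcal{D}$ into $\mathcal{H}$ continuously from $\mathcal{D}[t]$ into $\mathcal{H}$. A sequence $\{\xi_n\}\subset\mathcal{D}$ is Riesz-Fischer-like if for every orthonormal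 basis $\{e_n\}$ of $\mathcal{H}$ there exists $S\in\mathcal{C}(\mathcal{D},\mathcal{H})$ with $S\xi_n=e_n$ for all $n$. A sequence $\{\zeta_n\}\subset\mathcal{D}^\times$ is Bessel-like if for every bounded subset $\mathcal{M}$ of $\mathcal{D}[t]$, $\sup_{\eta\in\mathcal{M}}\sum_{k=1}^\infty|\langle\zeta_k,\eta\rangle|^2<\infty$. *)

From mathcomp Require Import all_boot all_algebra.
From mathcomp Require Import reals.
From mathcomp Require Import complex.
Set Implicit Arguments.
Unset Strict Implicit.
Unset Printing Implicit Defensive.
Import GRing.Theory Num.Theory ComplexField.
Local Open Scope ring_scope.

(* D is a predicate on H (a dense subspace), and the locally convex topology t
   on D is given by a directed family of seminorms p : I -> H -> R (only their
   values on D matter).  Elements of D^x are conjugate-linear t-continuous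
   functionals Phi : H -> C (only their values on D matter); the duality form
   <Phi, eta> is Phi eta, and h \in H is identified with eta |-> ip h eta. *)

Section RiggedHilbert.
Variable R : realType.
Local Notation C := R[i].
Variable H : lmodType C.
Variable ip : H -> H -> C.

Definition cabs (z : C) : R := Normc.normc z.
Definition hnorm (x : H) : R := Num.sqrt (cabs (ip x x)).

Definition is_hilbert : Prop :=
  [/\ (forall (a : C) (x y z : H), ip (a *: x + y) z = a * ip x z + ip y z),
      (forall x y : H, ip x y = ((ip y x)^*)%C),
      (forall x : H, x != 0 -> exists r : R, 0 < r /\ ip x x = r%:C%C) &
      (forall u : nat -> H,
         (forall eps : R, 0 < eps -> exists N : nat, forall m n : nat,
             (N <= m)%N -> (N <= n)%N -> hnorm (u m - u n) < eps) ->
         exists l : H, forall eps : R, 0 < eps -> exists N : nat,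
             forall n : nat, (N <= n)%N -> hnorm (u n - l) < eps)].

Definition is_onb (e : nat -> H) : Prop :=
  (forall n m : nat, ip (e n) (e m) = (n == m)%:R) /\
  (forall x : H, (forall n, ip x (e n) = 0) -> x = 0).

Variable D : H -> Prop.
Variable I : Type.
Variable p : I -> H -> R.

Definition rigged : Prop :=
  [/\ D 0 /\ (forall (a : C) (x y : H), D x -> D y -> D (a *: x + y)),
      (forall (x : H) (eps : R), 0 < eps -> exists d, D d /\ hnorm (x - d) < eps),
      (forall i x, D x -> 0 <= p i x) /\
      (forall i x y, D x -> D y -> p i (x + y) <= p i x + p i y) /\
      (forall i (a : C) x, D x -> p i (a *: x) = cabs a * p i x),
      (forall i j, exists k, forall x, D x -> p i x <= p k x /\ p j x <= p k x) &
      (exists i (c : R), forall x, D x -> hnorm x <= c * p i x)].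

Definition tbounded (M : H -> Prop) : Prop :=
  (forall x, M x -> D x) /\ (forall i, exists c : R, forall x, M x -> p i x <= c).

Definition is_dual (Phi : H -> C) : Prop :=
  (forall (a : C) x y, D x -> D y -> Phi (a *: x + y) = (a^*)%C * Phi x + Phi y) /\
  (exists i (c : R), forall x, D x -> cabs (Phi x) <= c * p i x).

Definition sbounded (B : (H -> C) -> Prop) : Prop :=
  (forall Phi, B Phi -> is_dual Phi) /\
  (forall M, tbounded M -> exists c : R, forall Phi eta, B Phi -> M eta ->
      cabs (Phi eta) <= c).

Definition is_bidual (F : (H -> C) -> C) : Prop :=
  (forall (a : C) Phi Psi, is_dual Phi -> is_dual Psi ->
      F (fun x => a * Phi x + Psi x) = a * F Phi + F Psi) /\
  (exists M (c : R), tbounded M /\ forall Phi, is_dual Phi -> forall s : R,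
      (forall eta, M eta -> cabs (Phi eta) <= s) -> cabs (F Phi) <= c * s).

Definition tcomplete : Prop :=
  forall (A : Type) (le : A -> A -> Prop),
    inhabited A -> (forall a, le a a) ->
    (forall a b c, le a b -> le b c -> le a c) ->
    (forall a b, exists c, le a c /\ le b c) ->
    forall x : A -> H, (forall a, D (x a)) ->
    (forall i (eps : R), 0 < eps -> exists a0, forall a b,
        le a0 a -> le a0 b -> p i (x a - x b) < eps) ->
    exists y, D y /\ forall i (eps : R), 0 < eps -> exists a0, forall a,
        le a0 a -> p i (x a - y) < eps.

(* D[t] is reflexive: the canonical map from D into the strong bidual is
   onto (semi-reflexivity) and t coincides with the strong topology
   beta(D, D^x) (seminorms xi |-> sup_{Phi in B} |<Phi, xi>|, B bounded in D^x). *)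
Definition treflexive : Prop :=
  [/\ (forall F, is_bidual F -> exists xi, D xi /\ forall Phi, is_dual Phi -> F Phi = Phi xi),
      (forall i, exists B (c : R), sbounded B /\ forall xi (s : R), D xi ->
          (forall Phi, B Phi -> cabs (Phi xi) <= s) -> p i xi <= c * s) &
      (forall B, sbounded B -> exists i (c : R), forall xi Phi, D xi -> B Phi ->
          cabs (Phi xi) <= c * p i xi)].

Definition in_L (X : H -> H -> C) : Prop :=
  [/\ (forall (a : C) x y eta, D x -> D y -> D eta ->
          X (a *: x + y) eta = a * X x eta + X y eta),
      (forall x, D x -> is_dual (X x)) &
      (forall M, tbounded M -> exists i (c : R), forall xi eta, D xi -> M eta ->
          cabs (X xi eta) <= c * p i xi)].

Definition in_CDH (X : H -> H -> C) : Prop :=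
  in_L X /\ exists S : H -> H,
    (forall xi eta, D xi -> D eta -> X xi eta = ip (S xi) eta) /\
    (exists i (c : R), forall xi, D xi -> hnorm (S xi) <= c * p i xi).

Definition riesz_fischer_like (xi : nat -> H) : Prop :=
  forall e : nat -> H, is_onb e ->
    exists X, in_CDH X /\ forall n eta, D eta -> X (xi n) eta = ip (e n) eta.

Definition bessel_like (zeta : nat -> H -> C) : Prop :=
  (forall n, is_dual (zeta n)) /\
  (forall M, tbounded M -> exists c : R, forall eta, M eta -> forall N : nat,
      \sum_(k < N) cabs (zeta k eta) ^+ 2 <= c).

End RiggedHilbert.

(* Forward: if S in C(D, H) maps xi_n to an orthonormal basis e_n, the functionals
   zeta_n = <S ., e_n>^* are biorthogonal to xi, and Bessel's inequality for S eta,
   together with continuity of S, makes them Bessel-like.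
   Backward: given e, the Bessel property makes sum_k zeta_k(eta)^* e_k converge
   for every eta in D, and its sum S eta satisfies S xi_n = e_n by biorthogonality.
   Continuity of S comes from reflexivity: the combinations sum_k a_k zeta_k with
   sum_k |a_k|^2 <= 1 form a bounded subset of D^x, hence an equicontinuous one,
   and |S eta| is the supremum of their values at eta. *)

From mathcomp Require Import all_boot all_algebra.
From mathcomp Require Import reals classical_sets.
From mathcomp Require Import complex.
From mathcomp Require Import ring lra.
From Stdlib Require Import ClassicalEpsilon FunctionalExtensionality.
Import GRing.Theory Num.Theory ComplexField.
Import order.Order.TTheory.
Local Open Scope ring_scope.
Set Implicit Arguments.
Unset Strict Implicit.

Section ComplexModulus.
Variable R : realType.
Local Notation C := R[i].

Lemma cabsE (z : C) : (cabs z)%:C%C = `|z|.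
Proof. by []. Qed.

Lemma cabs_ge0 (z : C) : 0 <= cabs z.
Proof. by rewrite -lecR cabsE normr_ge0. Qed.

Lemma cabsM (z w : C) : cabs (z * w) = cabs z * cabs w.
Proof. by apply: complexI; rewrite rmorphM !cabsE normrM. Qed.

Lemma cabsJ (z : C) : cabs (conjc z) = cabs z.
Proof. by apply: complexI; rewrite !cabsE normcJ. Qed.

Lemma cabsR (r : R) : 0 <= r -> cabs r%:C%C = r.
Proof.
by move=> r0; rewrite /cabs /Normc.normc /= expr0n addr0 sqrtr_sqr ger0_norm.
Qed.

Lemma sqr_cabsC (z : C) : ((cabs z ^+ 2)%:C)%C = z * conjc z.
Proof. by rewrite -sqr_normc -cabsE -rmorphXn. Qed.

Lemma Re_le_cabs (z : C) : complex.Re z <= cabs z.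
Proof. by rewrite (le_trans (ler_norm _)) // -lecR normc_ge_Re. Qed.

Lemma cabs_sum (T : Type) (r : seq T) (P : pred T) (f : T -> C) :
  cabs (\sum_(i <- r | P i) f i) <= \sum_(i <- r | P i) cabs (f i).
Proof.
by rewrite -lecR rmorph_sum cabsE (le_trans (ler_norm_sum _ _ _)).
Qed.

End ComplexModulus.

Section InnerProduct.
Variable R : realType.
Local Notation C := R[i].
Variable H : lmodType C.
Variable ip : H -> H -> C.
Hypothesis hH : is_hilbert ip.

Lemma ipDl x y z : ip (x + y) z = ip x z + ip y z.
Proof. by case: hH => h _ _ _; have := h 1 x y z; rewrite scale1r mul1r. Qed.

Lemma ip0l z : ip 0 z = 0.
Proof. by apply: (addrI (ip 0 z)); rewrite -ipDl !addr0. Qed.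

Lemma ipZl a x z : ip (a *: x) z = a * ip x z.
Proof. by case: hH => h _ _ _; have := h a x 0 z; rewrite !addr0 ip0l addr0. Qed.

Lemma ipC x y : ip x y = conjc (ip y x).
Proof. by case: hH. Qed.

Lemma ipNl x z : ip (- x) z = - ip x z.
Proof. by rewrite -scaleN1r ipZl mulN1r. Qed.

Lemma ipBl x y z : ip (x - y) z = ip x z - ip y z.
Proof. by rewrite ipDl ipNl. Qed.

Lemma ipDr x y z : ip z (x + y) = ip z x + ip z y.
Proof. by rewrite ipC ipDl rmorphD /= -!ipC. Qed.

Lemma ipZr a x z : ip z (a *: x) = conjc a * ip z x.
Proof. by rewrite ipC ipZl rmorphM /= -!ipC. Qed.

Lemma ip0r z : ip z 0 = 0.
Proof. by rewrite ipC ip0l conjc0. Qed.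

Lemma ipNr x z : ip z (- x) = - ip z x.
Proof. by rewrite ipC ipNl rmorphN /= -ipC. Qed.

Lemma ipBr x y z : ip z (x - y) = ip z x - ip z y.
Proof. by rewrite ipDr ipNr. Qed.

Lemma ip_suml (T : Type) (r : seq T) (P : pred T) (f : T -> H) z :
  ip (\sum_(i <- r | P i) f i) z = \sum_(i <- r | P i) ip (f i) z.
Proof. by elim/big_rec2: _ => [|i y1 y2 _ <-]; rewrite ?ip0l ?ipDl. Qed.

Lemma ip_sumr (T : Type) (r : seq T) (P : pred T) (f : T -> H) z :
  ip z (\sum_(i <- r | P i) f i) = \sum_(i <- r | P i) ip z (f i).
Proof. by elim/big_rec2: _ => [|i y1 y2 _ <-]; rewrite ?ip0r ?ipDr. Qed.

Lemma ip_ge0 x : 0 <= ip x x.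
Proof.
have [->|x0] := eqVneq x 0; first by rewrite ip0l.
by case: hH => _ _ h _; case: (h x x0) => r [r0 ->]; rewrite ler0c ltW.
Qed.

Lemma ip_eq0 x : ip x x = 0 -> x = 0.
Proof.
have [//|x0] := eqVneq x 0.
case: hH => _ _ h _; case: (h x x0) => r [r0 ->] /complexI r00.
by move: r0; rewrite r00 ltxx.
Qed.

Lemma hnorm_ge0 x : 0 <= hnorm ip x.
Proof. exact: sqrtr_ge0. Qed.

Lemma sqr_hnorm x : hnorm ip x ^+ 2 = cabs (ip x x).
Proof. by rewrite /hnorm sqr_sqrtr // cabs_ge0. Qed.

Lemma sqr_hnormC x : ((hnorm ip x ^+ 2)%:C)%C = ip x x.
Proof. by rewrite sqr_hnorm cabsE ger0_norm // ip_ge0. Qed.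

Lemma hnorm_eq0 x : hnorm ip x = 0 -> x = 0.
Proof. by move=> h; apply: ip_eq0; rewrite -sqr_hnormC h expr0n. Qed.

Lemma hnorm0 : hnorm ip 0 = 0.
Proof. by rewrite /hnorm ip0l /cabs Normc.normc0 sqrtr0. Qed.

Lemma hnorm_sqrE x r : 0 <= r -> ip x x = ((r ^+ 2)%:C)%C -> hnorm ip x = r.
Proof. by move=> r0 e; rewrite /hnorm e cabsR ?sqr_ge0 // sqrtr_sqr ger0_norm. Qed.

Lemma hnormrZ a x : hnorm ip (a *: x) = cabs a * hnorm ip x.
Proof.
apply: hnorm_sqrE; first by rewrite mulr_ge0 ?cabs_ge0 ?hnorm_ge0.
by rewrite ipZl ipZr exprMn rmorphM /= sqr_cabsC sqr_hnormC mulrA.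
Qed.

Lemma hnormrN x : hnorm ip (- x) = hnorm ip x.
Proof. by rewrite /hnorm ipNl ipNr opprK. Qed.

Lemma hnorm_distrC x y : hnorm ip (x - y) = hnorm ip (y - x).
Proof. by rewrite -hnormrN opprB. Qed.

Lemma cauchy_schwarz x y : cabs (ip x y) <= hnorm ip x * hnorm ip y.
Proof.
have [->|y0] := eqVneq y 0.
  by rewrite ip0r /cabs Normc.normc0 hnorm0 mulr0.
set a := ip x x; set b := ip y y; set c := ip x y.
have hb : b = ((hnorm ip y ^+ 2)%:C)%C by rewrite sqr_hnormC.
have ha : a = ((hnorm ip x ^+ 2)%:C)%C by rewrite sqr_hnormC.
have b0 : b != 0 by apply: contra_neq y0; apply: ip_eq0.
have hy_gt0 : 0 < hnorm ip y ^+ 2.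
  by rewrite lt0r sqr_ge0 andbT; apply: contra b0 => /eqP e; rewrite hb e.
have := ip_ge0 (x - (c / b) *: y).
rewrite !(ipBl, ipBr, ipZl, ipZr) -/a -/b -/c [ip y x]ipC -/c.
have tJ : conjc (c / b) = conjc c / b by rewrite rmorphM /= conjc_inv hb conjc_real.
have -> : a - conjc (c / b) * c - (c / b * conjc c - c / b * (conjc (c / b) * b))
          = a - c * conjc c / b by rewrite tJ; field.
rewrite ha hb -sqr_cabsC -fmorphV -rmorphM -rmorphB ler0c subr_ge0.
rewrite ler_pdivrMr // => h.
by rewrite -(@ler_pXn2r _ 2) ?nnegrE ?cabs_ge0 ?mulr_ge0 ?hnorm_ge0 // exprMn.
Qed.

Lemma ler_hnormD x y : hnorm ip (x + y) <= hnorm ip x + hnorm ip y.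
Proof.
have e : ip (x + y) (x + y) =
    ((hnorm ip x ^+ 2 + hnorm ip y ^+ 2 + 2 * complex.Re (ip x y))%:C)%C.
  rewrite !(ipDl, ipDr) !rmorphD /= !sqr_hnormC rmorphM /= rmorph_nat -addcJ.
  by rewrite [ip y x]ipC; ring.
rewrite -(@ler_pXn2r _ 2) // ?nnegrE ?addr_ge0 ?hnorm_ge0 //.
move: (sqr_hnormC (x + y)); rewrite e => /complexI ->.
have := le_trans (Re_le_cabs _) (cauchy_schwarz x y).
rewrite sqrrD -mulr_natr; nra.
Qed.

Lemma ler_hnormB x y : hnorm ip (x - y) <= hnorm ip x + hnorm ip y.
Proof. by rewrite -(hnormrN y) ler_hnormD. Qed.

End InnerProduct.

Section Orthonormal.
Variable R : realType.
Local Notation C := R[i].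
Variable H : lmodType C.
Variable ip : H -> H -> C.
Hypothesis hH : is_hilbert ip.
Variable e : nat -> H.
Hypothesis e_orthonormal : forall n m : nat, ip (e n) (e m) = (n == m)%:R.

Lemma ip_sumZl (r : seq nat) (a : nat -> C) v :
  ip (\sum_(k <- r) a k *: e k) v = \sum_(k <- r) a k * ip (e k) v.
Proof. by rewrite (ip_suml hH); apply: eq_bigr => k _; rewrite (ipZl hH). Qed.

Lemma ip_sumZr (r : seq nat) (a : nat -> C) v :
  ip v (\sum_(k <- r) a k *: e k) = \sum_(k <- r) conjc (a k) * ip v (e k).
Proof. by rewrite (ip_sumr hH); apply: eq_bigr => k _; rewrite (ipZr hH). Qed.

Lemma ip_sumZ (r : seq nat) (a b : nat -> C) : uniq r ->
  ip (\sum_(k <- r) a k *: e k) (\sum_(k <- r) b k *: e k) =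
  \sum_(k <- r) a k * conjc (b k).
Proof.
move=> ur; rewrite ip_sumZl; apply: eq_big_seq => i ir.
rewrite ip_sumZr (bigD1_seq i) //= e_orthonormal eqxx mulr1 big1 ?addr0 //.
by move=> j ji; rewrite e_orthonormal eq_sym (negbTE ji) mulr0.
Qed.

Lemma pythagoras (r : seq nat) (a : nat -> C) : uniq r ->
  hnorm ip (\sum_(k <- r) a k *: e k) ^+ 2 = \sum_(k <- r) cabs (a k) ^+ 2.
Proof.
move=> ur; apply: complexI; rewrite (sqr_hnormC hH) ip_sumZ // rmorph_sum /=.
by apply: eq_bigr => k _; rewrite sqr_cabsC.
Qed.

Lemma bessel_inequality v N :
  \sum_(k < N) cabs (ip v (e k)) ^+ 2 <= hnorm ip v ^+ 2.
Proof.
rewrite -(big_mkord xpredT (fun k => cabs (ip v (e k)) ^+ 2)).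
set r := index_iota 0 N; have ur : uniq r by rewrite /r /index_iota iota_uniq.
set c := fun k => ip v (e k).
set s := \sum_(k <- r) c k *: e k.
have sum_sqr : \sum_(k <- r) c k * conjc (c k) = ((\sum_(k <- r) cabs (c k) ^+ 2)%:C)%C.
  by rewrite rmorph_sum /=; apply: eq_bigr => k _; rewrite sqr_cabsC.
have ip_vs : ip v s = \sum_(k <- r) c k * conjc (c k).
  by rewrite ip_sumZr; apply: eq_bigr => k _; rewrite mulrC.
have ip_sv : ip s v = \sum_(k <- r) c k * conjc (c k).
  by rewrite ip_sumZl; apply: eq_bigr => k _; rewrite (ipC hH).
have := ip_ge0 hH (v - s).
rewrite (ipBl hH) !(ipBr hH) ip_vs ip_sv ip_sumZ // sum_sqr -(sqr_hnormC hH v).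
by rewrite subrr subr0 -rmorphB ler0c subr_ge0.
Qed.

End Orthonormal.

Lemma nondecreasing_bounded_cauchy (R : realType) (T : nat -> R) (B : R) :
  (forall n, T n <= T n.+1) -> (forall n, T n <= B) ->
  forall eps, 0 < eps -> exists N, forall m n, (N <= m)%N -> (m <= n)%N ->
    T n - T m < eps.
Proof.
move=> T_incr T_le_B eps eps_gt0.
have T_mono : {homo T : a b / (a <= b)%N >-> a <= b}.
  by apply: homo_leq => //; apply: le_trans.
pose S : set R := fun x => exists n, x = T n.
have supS : has_sup S by split; [exists (T 0%N); exists 0%N | exists B => x [n ->]].
have [x [N ->] hN] := sup_adherent eps_gt0 supS.
exists N => m n Nm mn.
have := sup_upper_bound supS (ex_intro _ n erefl).
have := T_mono _ _ Nm.
lra.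
Qed.

Section Convergence.
Variable R : realType.
Local Notation C := R[i].
Variable H : lmodType C.
Variable ip : H -> H -> C.
Hypothesis hH : is_hilbert ip.

Definition hcvg_to (u : nat -> H) (l : H) := forall eps : R, 0 < eps ->
  exists N : nat, forall n : nat, (N <= n)%N -> hnorm ip (u n - l) < eps.

Lemma hnorm_small_eq0 w : (forall eps : R, 0 < eps -> hnorm ip w < eps) -> w = 0.
Proof.
move=> h; apply: (hnorm_eq0 hH); apply/eqP; rewrite eq_le hnorm_ge0 andbT.
by apply/ler_addgt0Pr => eps /h /ltW; rewrite add0r.
Qed.

Section Dense.
Variable D : H -> Prop.
Hypothesis D_dense :
  forall (x : H) (eps : R), 0 < eps -> exists d, D d /\ hnorm ip (x - d) < eps.

(* Approximate w by d in D; then |w|^2 = <w, w - d> <= |w| |w - d| <= |w|^2 / 2. *)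
Lemma dense_perp_eq0 w : (forall d, D d -> ip w d = 0) -> w = 0.
Proof.
move=> w_perp; apply: (hnorm_eq0 hH).
have w_ge0 := hnorm_ge0 ip w.
have [//|w_neq0] := eqVneq (hnorm ip w) 0.
have w_gt0 : 0 < hnorm ip w by rewrite lt0r w_neq0.
have [d [Dd hd]] := D_dense w (divr_gt0 w_gt0 (ltr0Sn _ 1)).
have ip_wd : ip w w = ip w (w - d) by rewrite (ipBr hH) (w_perp d Dd) subr0.
have := cauchy_schwarz hH w (w - d); rewrite -ip_wd -(sqr_hnorm ip).
have := hnorm_ge0 ip (w - d).
nra.
Qed.

Lemma dense_ip_inj u v : (forall d, D d -> ip u d = ip v d) -> u = v.
Proof.
move=> huv; apply/eqP; rewrite -subr_eq0; apply/eqP.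
by apply: dense_perp_eq0 => d Dd; rewrite (ipBl hH) huv // subrr.
Qed.

End Dense.

Lemma hcvg_unique u l l' : hcvg_to u l -> hcvg_to u l' -> l = l'.
Proof.
move=> hl hl'; apply/eqP; rewrite -subr_eq0; apply/eqP.
apply: hnorm_small_eq0 => eps eps_gt0.
have eps2 : 0 < eps / 2 by rewrite divr_gt0.
have [N1 h1] := hl _ eps2; have [N2 h2] := hl' _ eps2.
have := h1 (maxn N1 N2) (leq_maxl _ _); have := h2 (maxn N1 N2) (leq_maxr _ _).
set w := u (maxn N1 N2).
have -> : l - l' = (w - l') - (w - l) by rewrite opprB [in RHS]addrC [in RHS]addrA subrK.
have := ler_hnormB hH (w - l') (w - l).
lra.
Qed.

Lemma hcvgZD u v l m (a : C) : hcvg_to u l -> hcvg_to v m ->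
  hcvg_to (fun n => a *: u n + v n) (a *: l + m).
Proof.
move=> hu hv eps eps_gt0.
have a_ge0 := cabs_ge0 a.
have k_gt0 : 0 < 2 * (cabs a + 1) by rewrite mulr_gt0 // ltr_wpDl.
have [N1 h1] := hu _ (divr_gt0 eps_gt0 k_gt0).
have [N2 h2] := hv _ (divr_gt0 eps_gt0 (ltr0Sn _ 1)).
exists (maxn N1 N2) => n Nn.
have := h1 n (leq_trans (leq_maxl _ _) Nn).
have := h2 n (leq_trans (leq_maxr _ _) Nn).
have -> : a *: u n + v n - (a *: l + m) = a *: (u n - l) + (v n - m).
  by rewrite scalerBr opprD addrACA.
have := ler_hnormD hH (a *: (u n - l)) (v n - m); rewrite (hnormrZ hH).
move=> triangle hvm hul.
have hul' : cabs a * hnorm ip (u n - l) <= cabs a * (eps / (2 * (cabs a + 1))).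
  by rewrite ler_wpM2l // ltW.
have a_frac : cabs a / (2 * (cabs a + 1)) <= 1 / 2 by rewrite ler_pdivrMr //; lra.
have := ler_wpM2r (ltW eps_gt0) a_frac.
rewrite mulrA mulrAC in hul'.
lra.
Qed.

Lemma hcvg_eventually_const u l N : (forall n, (N <= n)%N -> u n = l) -> hcvg_to u l.
Proof. by move=> h eps eps_gt0; exists N => n hn; rewrite h // subrr hnorm0. Qed.

Lemma hcvg_hnorm_le u l (B : R) : hcvg_to u l -> (forall n, hnorm ip (u n) <= B) ->
  hnorm ip l <= B.
Proof.
move=> hl hB; apply/ler_addgt0Pr => eps eps_gt0.
have [N h] := hl _ eps_gt0.
have -> : l = u N - (u N - l) by rewrite opprB addrC subrK.
have := h N (leqnn N); have := hB N.
have := ler_hnormB hH (u N) (u N - l).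
lra.
Qed.

Variable e : nat -> H.
Hypothesis e_orthonormal : forall n m : nat, ip (e n) (e m) = (n == m)%:R.

(* The partial sums are Cauchy by Pythagoras; H is complete. *)
Lemma orthonormal_series_cvg (a : nat -> C) (B : R) :
  (forall n, \sum_(k < n) cabs (a k) ^+ 2 <= B) ->
  exists l, hcvg_to (fun n => \sum_(0 <= k < n) a k *: e k) l.
Proof.
move=> hB.
set T := fun n => \sum_(0 <= k < n) cabs (a k) ^+ 2.
have T_incr n : T n <= T n.+1 by rewrite /T big_nat_recr //= lerDl sqr_ge0.
have T_le_B n : T n <= B by rewrite /T big_mkord.
have sqr_hnorm_diff m n : (m <= n)%N ->
    hnorm ip (\sum_(0 <= k < n) a k *: e k - \sum_(0 <= k < m) a k *: e k) ^+ 2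
    = T n - T m.
  move=> mn; rewrite /T (big_cat_nat (leq0n m) mn) /= addrC addrK.
  rewrite (big_cat_nat (leq0n m) mn) /= [X in X - _]addrC addrK.
  by rewrite (pythagoras hH e_orthonormal) // /index_iota iota_uniq.
case: hH => _ _ _; apply => eps eps_gt0.
have [N hN] := nondecreasing_bounded_cauchy T_incr T_le_B (mulr_gt0 eps_gt0 eps_gt0).
exists N => m n Nm Nn.
have := hnorm_ge0 ip (\sum_(0 <= k < m) a k *: e k - \sum_(0 <= k < n) a k *: e k).
case: (leqP n m) => nm.
  by have := sqr_hnorm_diff _ _ nm; have := hN _ _ Nn nm; nra.
rewrite (hnorm_distrC hH).
by have := sqr_hnorm_diff _ _ (ltnW nm); have := hN _ _ Nm (ltnW nm); nra.
Qed.

End Convergence.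

Section RiggedSpace.
Variable R : realType.
Local Notation C := R[i].
Variable H : lmodType C.
Variable ip : H -> H -> C.
Variable D : H -> Prop.
Variable I : Type.
Variable p : I -> H -> R.
Hypothesis hH : is_hilbert ip.
Hypothesis D_lin : forall (a : C) (x y : H), D x -> D y -> D (a *: x + y).
Hypothesis D_dense :
  forall (x : H) (eps : R), 0 < eps -> exists d, D d /\ hnorm ip (x - d) < eps.
Hypothesis p_ge0 : forall i x, D x -> 0 <= p i x.
Hypothesis p_directed :
  forall i j, exists k, forall x, D x -> p i x <= p k x /\ p j x <= p k x.
Variables (j : I) (cj : R).
Hypothesis hnorm_le_p : forall x, D x -> hnorm ip x <= cj * p j x.

Lemma bessel_like_bounded (S : H -> H) (e : nat -> H) (i : I) (c : R) :
  (forall n m : nat, ip (e n) (e m) = (n == m)%:R) ->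
  (forall a x y, D x -> D y -> S (a *: x + y) = a *: S x + S y) ->
  (forall x, D x -> hnorm ip (S x) <= c * p i x) ->
  bessel_like D p (fun n eta => conjc (ip (S eta) (e n))).
Proof.
move=> e_orthonormal S_lin S_bound.
have hnorm_e n : hnorm ip (e n) = 1.
  by apply: hnorm_sqrE => //; rewrite e_orthonormal eqxx expr1n.
split=> [n|M [MD Mb]].
  split=> [a x y Dx Dy|].
    by rewrite S_lin // (ipDl hH) (ipZl hH) rmorphD rmorphM.
  exists i, c => x Dx; rewrite cabsJ.
  by rewrite (le_trans (cauchy_schwarz hH _ _)) // hnorm_e mulr1 S_bound.
have [b hb] := Mb i.
exists ((`|c| * b) ^+ 2) => eta Meta N.
under eq_bigr do rewrite /= cabsJ.
have := bessel_inequality hH e_orthonormal (S eta) N.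
have := hnorm_ge0 ip (S eta); have := S_bound eta (MD _ Meta); have := hb eta Meta.
have c_le : c * p i eta <= `|c| * p i eta.
  by rewrite ler_wpM2r ?ler_norm // p_ge0 //; apply: MD.
have := ler_wpM2l (normr_ge0 c) (hb eta Meta).
nra.
Qed.

Lemma riesz_fischer_like_biorthogonal (xi : nat -> H) : (forall n, D (xi n)) ->
  (exists e : nat -> H, is_onb ip e) -> riesz_fischer_like ip D p xi ->
  exists zeta : nat -> H -> C, bessel_like D p zeta /\
    (forall n k : nat, zeta n (xi k) = (n == k)%:R).
Proof.
move=> Dxi [e e_onb] /(_ e e_onb) [X [[[X_lin _ _] [S [XS [i [c S_bound]]]]] Xxi]].
have e_orthonormal := e_onb.1.
have S_lin a x y : D x -> D y -> S (a *: x + y) = a *: S x + S y.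
  move=> Dx Dy; have Daxy := D_lin a Dx Dy.
  apply: (dense_ip_inj hH D_dense) => d Dd.
  by rewrite (ipDl hH) (ipZl hH) -!XS // X_lin.
have Sxi k : S (xi k) = e k.
  apply: (dense_ip_inj hH D_dense) => d Dd.
  by rewrite -XS ?Xxi //; apply: Dxi.
exists (fun n eta => conjc (ip (S eta) (e n))); split.
  exact: bessel_like_bounded e_orthonormal S_lin S_bound.
by move=> n k; rewrite Sxi e_orthonormal eq_sym conjc_nat.
Qed.

Lemma dual_family_bound (zeta : nat -> H -> C) :
  (forall n, is_dual D p (zeta n)) -> forall N, exists i (c : R), 0 <= c /\
    forall k, (k < N)%N -> forall x, D x -> cabs (zeta k x) <= c * p i x.
Proof.
move=> zeta_dual; elim=> [|N [i [c [c_ge0 IH]]]]; first by exists j, 0.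
have [_ [i' [c' hc']]] := zeta_dual N.
have [k hk] := p_directed i i'.
exists k, (c + `|c'|); split; first by rewrite addr_ge0.
move=> n; rewrite ltnS leq_eqVlt => /orP [/eqP -> | nN] x Dx;
  have := hk x Dx; have := p_ge0 i' Dx; have := p_ge0 i Dx;
  have := ler_norm c'; have := normr_ge0 c'.
  by have := hc' x Dx; nra.
by have := IH n nN x Dx; nra.
Qed.

Definition unit_combinations (zeta : nat -> H -> C) (Phi : H -> C) : Prop :=
  exists N (a : nat -> C), \sum_(k < N) cabs (a k) ^+ 2 <= 1 /\
    Phi = (fun x => \sum_(k < N) a k * zeta k x).

Lemma unit_combinations_sbounded zeta :
  bessel_like D p zeta -> sbounded D p (unit_combinations zeta).
Proof.
case=> zeta_dual zeta_bessel; split=> [Phi [N [a [_ ->]]]|M hM].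
  split=> [b x y Dx Dy|].
    rewrite mulr_sumr -big_split /=; apply: eq_bigr => k _.
    by rewrite ((zeta_dual k).1 b x y Dx Dy); ring.
  have [i [c [c_ge0 hc]]] := dual_family_bound zeta_dual N.
  exists i, ((\sum_(k < N) cabs (a k)) * c) => x Dx.
  rewrite (le_trans (cabs_sum _ _ _)) // -mulrA mulr_suml; apply: ler_sum => k _.
  by rewrite cabsM ler_wpM2l ?cabs_ge0 ?hc.
have [b hb] := zeta_bessel M hM.
exists (1 + b) => Phi eta [N [a [ha ->]]] Meta.
rewrite (le_trans (cabs_sum _ _ _)) //.
have := hb eta Meta N.
have : \sum_(k < N) cabs (a k * zeta k eta) <=
    \sum_(k < N) cabs (a k) ^+ 2 + \sum_(k < N) cabs (zeta k eta) ^+ 2.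
  rewrite -big_split /=; apply: ler_sum => k _; rewrite cabsM.
  by have := cabs_ge0 (a k); have := cabs_ge0 (zeta k eta); nra.
lra.
Qed.

Hypothesis sbounded_equicontinuous : forall B, sbounded D p B ->
  exists i (c : R), forall xi Phi, D xi -> B Phi -> cabs (Phi xi) <= c * p i xi.

(* The square-root sum is the value at x of the unit combination with
   coefficients conj (zeta_k x) divided by that square root. *)
Lemma bessel_like_sqrt_sum_le zeta : bessel_like D p zeta ->
  exists i (c : R), forall x n, D x ->
    Num.sqrt (\sum_(k < n) cabs (zeta k x) ^+ 2) <= c * p i x.
Proof.
move=> zeta_bessel.
have [i [c hc]] := sbounded_equicontinuous (unit_combinations_sbounded zeta_bessel).
exists i, c => x n Dx.
set T := \sum_(k < n) cabs (zeta k x) ^+ 2.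
have T_ge0 : 0 <= T by apply: sumr_ge0 => k _; exact: sqr_ge0.
have [->|T_neq0] := eqVneq T 0.
  rewrite sqrtr0; have := hc x (fun=> 0) Dx; rewrite /cabs Normc.normc0; apply.
  exists 0%N, (fun=> 0); rewrite big_ord0; split=> //.
  by apply: functional_extensionality => y; rewrite big_ord0.
have T_gt0 : 0 < T by rewrite lt0r T_neq0.
set s := Num.sqrt T.
have s_gt0 : 0 < s by rewrite sqrtr_gt0.
have sqr_s : s ^+ 2 = T by rewrite sqr_sqrtr.
pose a k := conjc (zeta k x) * ((s^-1)%:C)%C.
have sqr_cabs_a k : cabs (a k) ^+ 2 = cabs (zeta k x) ^+ 2 / T.
  by rewrite /a cabsM cabsJ cabsR ?invr_ge0 ?ltW // exprMn -sqr_s exprVn.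
have sum_a : \sum_(k < n) a k * zeta k x = (s%:C)%C.
  have -> : s = T / s by rewrite -sqr_s expr2 mulfK // gt_eqF.
  rewrite rmorphM fmorphV /= /T rmorph_sum /= mulr_suml; apply: eq_bigr => k _.
  by rewrite /a sqr_cabsC -fmorphV; ring.
have := hc x (fun y => \sum_(k < n) a k * zeta k y) Dx.
rewrite sum_a cabsR ?(ltW s_gt0) //; apply.
exists n, a; split => //.
by under eq_bigr do rewrite sqr_cabs_a; rewrite -mulr_suml mulfV.
Qed.

Section Synthesis.
Variable e : nat -> H.
Hypothesis e_orthonormal : forall n m : nat, ip (e n) (e m) = (n == m)%:R.
Variable zeta : nat -> H -> C.
Hypothesis zeta_bessel : bessel_like D p zeta.

Definition synthesis_sum x n := \sum_(0 <= k < n) conjc (zeta k x) *: e k.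

Definition synthesis x : H := epsilon (inhabits 0) (hcvg_to ip (synthesis_sum x)).

Lemma synthesis_cvg x : D x -> hcvg_to ip (synthesis_sum x) (synthesis x).
Proof.
move=> Dx; rewrite /synthesis; apply: epsilon_spec.
have x_bounded : tbounded D p (fun y => y = x).
  by split=> [y ->|i] //; exists (p i x) => y ->.
have [b hb] := zeta_bessel.2 _ x_bounded.
apply: (orthonormal_series_cvg hH e_orthonormal) => n.
by under eq_bigr do rewrite cabsJ; exact: hb.
Qed.

Lemma synthesis_linear a x y : D x -> D y ->
  synthesis (a *: x + y) = a *: synthesis x + synthesis y.
Proof.
move=> Dx Dy; apply: (hcvg_unique hH (synthesis_cvg (D_lin a Dx Dy))).
have -> : synthesis_sum (a *: x + y) =
    (fun n => a *: synthesis_sum x n + synthesis_sum y n).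
  apply: functional_extensionality => n.
  rewrite /synthesis_sum scaler_sumr -big_split /=.
  apply: eq_bigr => k _; rewrite ((zeta_bessel.1 k).1 a x y Dx Dy).
  by rewrite rmorphD rmorphM /= conjcK scalerDl scalerA.
exact: (hcvgZD hH a (synthesis_cvg Dx) (synthesis_cvg Dy)).
Qed.

Lemma synthesis_bound : exists i (c : R), forall x, D x ->
  hnorm ip (synthesis x) <= c * p i x.
Proof.
have [i [c hc]] := bessel_like_sqrt_sum_le zeta_bessel.
exists i, c => x Dx; apply: (hcvg_hnorm_le hH (synthesis_cvg Dx)) => n.
rewrite -[hnorm _ _]ger0_norm ?hnorm_ge0 // -sqrtr_sqr.
rewrite (pythagoras hH e_orthonormal) ?iota_uniq // big_mkord.
by under eq_bigr do rewrite cabsJ; exact: hc.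
Qed.

Lemma synthesis_biorthogonal (xi : nat -> H) :
  (forall n k, zeta n (xi k) = (n == k)%:R) ->
  forall n, D (xi n) -> synthesis (xi n) = e n.
Proof.
move=> biorth n Dxi; apply: (hcvg_unique hH (synthesis_cvg Dxi)).
apply: (hcvg_eventually_const hH (N := n.+1)) => m nm.
rewrite /synthesis_sum (big_cat_nat (leq0n n.+1) nm) /= big_nat_recr //=.
rewrite biorth eqxx conjc_nat scale1r !big1_seq ?add0r ?addr0 // => k /andP [_].
  by rewrite mem_index_iota biorth => /andP [nk _]; rewrite gtn_eqF // conjc0 scale0r.
by rewrite mem_index_iota biorth => /andP [_ kn]; rewrite ltn_eqF // conjc0 scale0r.
Qed.

End Synthesis.

Lemma in_CDH_ip (S : H -> H) (i : I) (c : R) :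
  (forall a x y, D x -> D y -> S (a *: x + y) = a *: S x + S y) ->
  (forall x, D x -> hnorm ip (S x) <= c * p i x) ->
  in_CDH ip D p (fun x eta => ip (S x) eta).
Proof.
move=> S_lin S_bound; split; last by exists S; split=> //; exists i, c.
split=> [a x y eta Dx Dy _|x Dx|M [MD Mb]].
- by rewrite S_lin // (ipDl hH) (ipZl hH).
- split=> [a y z Dy Dz|]; first by rewrite (ipDr hH) (ipZr hH).
  exists j, (hnorm ip (S x) * cj) => y Dy.
  rewrite (le_trans (cauchy_schwarz hH _ _)) // -mulrA.
  by rewrite ler_wpM2l ?hnorm_ge0 ?hnorm_le_p.
- have [b hb] := Mb j.
  exists i, (c * (`|cj| * b)) => x eta Dx Meta.
  have Deta := MD _ Meta.
  have cj_b : hnorm ip eta <= `|cj| * b.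
    apply: le_trans (hnorm_le_p Deta) _.
    apply: le_trans (ler_wpM2r (p_ge0 j Deta) (ler_norm cj)) _.
    by rewrite ler_wpM2l ?hb.
  rewrite (le_trans (cauchy_schwarz hH _ _)) // mulrAC.
  have := hnorm_ge0 ip (S x); have := hnorm_ge0 ip eta; have := S_bound x Dx.
  nra.
Qed.

Lemma biorthogonal_riesz_fischer_like (xi : nat -> H) : (forall n, D (xi n)) ->
  (exists zeta : nat -> H -> C, bessel_like D p zeta /\
    (forall n k : nat, zeta n (xi k) = (n == k)%:R)) ->
  riesz_fischer_like ip D p xi.
Proof.
move=> Dxi [zeta [zeta_bessel biorth]] e [e_orthonormal _].
have [i [c S_bound]] := synthesis_bound e_orthonormal zeta_bessel.
exists (fun x eta => ip (synthesis e zeta x) eta); split.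
  exact: in_CDH_ip (synthesis_linear e_orthonormal zeta_bessel) S_bound.
by move=> n eta Deta; rewrite (synthesis_biorthogonal e_orthonormal zeta_bessel).
Qed.

End RiggedSpace.

Unset Implicit Arguments.

Theorem proposition2p16 (R : realType) (H : lmodType R[i]) (ip : H -> H -> R[i])
  (D : H -> Prop) (I : Type) (p : I -> H -> R)
  (hH : is_hilbert ip) (hsep : exists e : nat -> H, is_onb ip e)
  (hD : rigged ip D p) (hcompl : tcomplete D p) (hrefl : treflexive D p)
  (xi : nat -> H) (hxi : forall n, D (xi n)) :
  riesz_fischer_like ip D p xi <->
  exists zeta : nat -> H -> R[i], bessel_like D p zeta /\
    (forall n k : nat, zeta n (xi k) = (n == k)%:R).
Proof.
have [[_ D_lin] D_dense [p_ge0 _] p_directed [j [cj hnorm_le_p]]] := hD.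
have [_ _ sbounded_equicontinuous] := hrefl.
split.
  exact: (riesz_fischer_like_biorthogonal hH D_lin D_dense p_ge0 hxi hsep).
exact: (biorthogonal_riesz_fischer_like hH D_lin p_ge0 p_directed hnorm_le_p
  sbounded_equicontinuous hxi).
Qed.
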